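(* For integers $k \geq 0$ and $0 \leq n \leq k$, let $a_{k,n} = (-2)^k + 2^n$. Let $0 \leq n \leq k_1$ and $0 \leq m \leq k_2$ with $(k_1, n) \neq (k_2, m)$. Then $a_{k_1,n} = a_{k_2,m}$ if and only if $k_1$ and $k_2$ are both odd, $n = k_1$ and $m = k_2$. *)

From Stdlib Require Import ZArith Lia.
Open Scope Z_scope.

Definition a (k n : nat) : Z := (-2) ^ Z.of_nat k + 2 ^ Z.of_nat n.

From Stdlib Require Import ZArith Arith Lia.
Open Scope Z_scope.

(* For even k, a_{k,n} = 2^k + 2^n is positive, and two such sums of powers of
   two with n <= k determine (k, n), as in a binary expansion.  For odd k,
   a_{k,n} = 2^n - 2^k is nonpositive, vanishes exactly when n = k, and is
   otherwise again determined by (k, n) since 2^k - 2^n lies strictly between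
   2^(k-1) and 2^k. *)

Lemma a_even (k n : nat) : Nat.Even k -> a k n = 2 ^ Z.of_nat k + 2 ^ Z.of_nat n.
Proof.
  intros [j ->]. unfold a. change (-2) with (Z.opp 2). rewrite Z.pow_opp_even; [reflexivity|].
  exists (Z.of_nat j). lia.
Qed.

Lemma a_odd (k n : nat) : Nat.Odd k -> a k n = 2 ^ Z.of_nat n - 2 ^ Z.of_nat k.
Proof.
  intros [j ->]. unfold a. change (-2) with (Z.opp 2). rewrite Z.pow_opp_odd; [lia|].
  exists (Z.of_nat j). lia.
Qed.

Lemma double_pow2_le (u x : Z) : 0 <= u < x -> 2 * 2 ^ u <= 2 ^ x.
Proof.
  intros H. rewrite <- Z.pow_succ_r by lia.
  apply Z.pow_le_mono_r; lia.
Qed.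

Lemma pow2_add_lt (x y u v : Z) :
  0 <= u <= x -> 0 <= v -> x < y -> 2 ^ x + 2 ^ u < 2 ^ y + 2 ^ v.
Proof.
  intros Hu Hv Hxy.
  assert (2 ^ u <= 2 ^ x) by (apply Z.pow_le_mono_r; lia).
  assert (2 * 2 ^ x <= 2 ^ y) by (apply double_pow2_le; lia).
  assert (0 < 2 ^ v) by (apply Z.pow_pos_nonneg; lia).
  lia.
Qed.

Lemma pow2_add_inj (x y u v : Z) : 0 <= u <= x -> 0 <= v <= y ->
  2 ^ x + 2 ^ u = 2 ^ y + 2 ^ v -> x = y /\ u = v.
Proof.
  intros Hu Hv E.
  destruct (Z.lt_trichotomy x y) as [Hxy|[<-|Hyx]].
  - pose proof (pow2_add_lt x y u v Hu ltac:(lia) Hxy). lia.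
  - split; [reflexivity|]. apply (Z.pow_inj_r 2); lia.
  - pose proof (pow2_add_lt y x v u Hv ltac:(lia) Hyx). lia.
Qed.

Lemma pow2_sub_lt (x y u v : Z) :
  0 <= u < x -> 0 <= v < y -> x < y -> 2 ^ x - 2 ^ u < 2 ^ y - 2 ^ v.
Proof.
  intros Hu Hv Hxy.
  assert (0 < 2 ^ u) by (apply Z.pow_pos_nonneg; lia).
  assert (2 ^ x <= 2 ^ (y - 1)) by (apply Z.pow_le_mono_r; lia).
  assert (2 ^ v <= 2 ^ (y - 1)) by (apply Z.pow_le_mono_r; lia).
  assert (2 * 2 ^ (y - 1) <= 2 ^ y) by (apply double_pow2_le; lia).
  lia.
Qed.

Lemma pow2_sub_inj (x y u v : Z) : 0 <= u < x -> 0 <= v < y ->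
  2 ^ x - 2 ^ u = 2 ^ y - 2 ^ v -> x = y /\ u = v.
Proof.
  intros Hu Hv E.
  destruct (Z.lt_trichotomy x y) as [Hxy|[<-|Hyx]].
  - pose proof (pow2_sub_lt x y u v Hu Hv Hxy). lia.
  - split; [reflexivity|]. apply (Z.pow_inj_r 2); lia.
  - pose proof (pow2_sub_lt y x v u Hv Hu Hyx). lia.
Qed.

Lemma a_even_pos (k n : nat) : Nat.Even k -> 0 < a k n.
Proof.
  intros Hk. rewrite a_even by exact Hk.
  assert (0 < 2 ^ Z.of_nat k) by (apply Z.pow_pos_nonneg; lia).
  assert (0 < 2 ^ Z.of_nat n) by (apply Z.pow_pos_nonneg; lia).
  lia.
Qed.

Lemma a_odd_nonpos (k n : nat) : Nat.Odd k -> (n <= k)%nat -> a k n <= 0.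
Proof.
  intros Hk Hn. rewrite a_odd by exact Hk.
  assert (2 ^ Z.of_nat n <= 2 ^ Z.of_nat k) by (apply Z.pow_le_mono_r; lia).
  lia.
Qed.

Lemma a_eq0 (k n : nat) : a k n = 0 <-> Nat.odd k = true /\ n = k.
Proof.
  rewrite Nat.odd_spec.
  destruct (Nat.Even_or_Odd k) as [Hk|Hk].
  - pose proof (a_even_pos k n Hk).
    split; [lia|intros [Hk' _]; destruct (Nat.Even_Odd_False k Hk Hk')].
  - rewrite a_odd by exact Hk.
    split; [|intros [_ ->]; lia].
    intros E. split; [exact Hk|].
    apply Nat2Z.inj, (Z.pow_inj_r 2); lia.
Qed.

Lemma a_inj_nonzero (k1 k2 n m : nat) : (n <= k1)%nat -> (m <= k2)%nat ->
  a k1 n = a k2 m -> a k1 n <> 0 -> (k1, n) = (k2, m).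
Proof.
  intros Hn Hm E Hnz.
  assert (Hnz' : a k2 m <> 0) by congruence.
  destruct (Nat.Even_or_Odd k1) as [H1|H1], (Nat.Even_or_Odd k2) as [H2|H2].
  - rewrite (a_even k1 n H1), (a_even k2 m H2) in E.
    destruct (pow2_add_inj (Z.of_nat k1) (Z.of_nat k2) (Z.of_nat n) (Z.of_nat m))
      as [Ek En]; [lia|lia|exact E|].
    f_equal; lia.
  - pose proof (a_even_pos k1 n H1). pose proof (a_odd_nonpos k2 m H2 Hm). lia.
  - pose proof (a_odd_nonpos k1 n H1 Hn). pose proof (a_even_pos k2 m H2). lia.
  - assert (n <> k1) by (intros ->; apply Hnz, a_eq0; split; [apply Nat.odd_spec|]; auto).
    assert (m <> k2) by (intros ->; apply Hnz', a_eq0; split; [apply Nat.odd_spec|]; auto).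
    rewrite (a_odd k1 n H1), (a_odd k2 m H2) in E.
    destruct (pow2_sub_inj (Z.of_nat k1) (Z.of_nat k2) (Z.of_nat n) (Z.of_nat m))
      as [Ek En]; [lia|lia|lia|].
    f_equal; lia.
Qed.

Theorem lemma3 (k1 k2 n m : nat) :
  (n <= k1)%nat -> (m <= k2)%nat -> (k1, n) <> (k2, m) ->
  (a k1 n = a k2 m <->
   (Nat.odd k1 = true /\ Nat.odd k2 = true /\ n = k1 /\ m = k2)).
Proof.
  intros Hn Hm Hne. split.
  - intros E.
    destruct (Z.eq_dec (a k1 n) 0) as [Z1|Z1].
    + assert (Z2 : a k2 m = 0) by congruence.
      apply a_eq0 in Z1 as [O1 ->]. apply a_eq0 in Z2 as [O2 ->]. auto.
    + destruct (Hne (a_inj_nonzero k1 k2 n m Hn Hm E Z1)).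
  - intros (O1 & O2 & -> & ->).
    transitivity 0; [|symmetry]; apply a_eq0; auto.
Qed.
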